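(* Let $G$ be a connected nontrivial graph with $m$ vertices and let $n\geq3$. If $\min\{3n\lambda(G),\ 2(m+2e(G))\}\geq 6\delta(G)+2$, then $G\boxtimes C_n$ is maximally restricted edge-connected, i.e. $\lambda'(G\boxtimes C_n)=\xi(G\boxtimes C_n)$.
   Context: All graphs are finite, simple and undirected; ''nontrivial'' means having at least two vertices. $C_n$ denotes the cycle on $n$ vertices. For a graph $G$: $e(G)=|E(G)|$; $\delta(G)$ is the minimum degree; $\lambda(G)$ is the edge-connectivity; for an edge $uv$, its edge-degree is $d_G(u)+d_G(v)-2$, and $\xi(G)$ is the minimum edge-degree over all edges. A restricted edge-cut of a connected graph $G$ is a set $S\subseteq E(G)$ such that $G-S$ is disconnected and every component of $G-S$ has at least $2$ vertices; $\lambda'(G)$ is the minimum cardinality of a restricted edge-cut. A graph $G$ is maximally restricted edge-connected if $\lambda'(G)=\xi(G)$. The strong product $G\boxtimes H$ has vertex set $V(G)\times V(H)$, with $(x_1,y_1)$ and $(x_2,y_2)$ adjacent iff either $x_1=x_2$ and $y_1y_2\in E(H)$, or $y_1=y_2$ and $x_1x_2\in E(G)$, or $x_1x_2\in E(G)$ and $y_1y_2\in E(H)$. (One has $\xi(G\boxtimes C_n)=6\delta(G)+2$.) *)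

(* A simple graph is a symmetric irreflexive relation on a finType. *)
From mathcomp Require Import all_boot.
Set Implicit Arguments. Unset Strict Implicit. Unset Printing Implicit Defensive.

Section Graphs.
Variable T : finType.
Implicit Type g : rel T.

Definition connected g := forall x y : T, connect g x y.

Definition edges g : {set {set T}} :=
  [set A : {set T} | [exists x, exists y, g x y && (A == [set x; y])]].

Definition deg g (x : T) : nat := #|[set y | g x y]|.
Definition mindeg g : nat := \big[minn/#|T|]_(x : T) deg g x.

Definition xi g : nat :=
  \big[minn/(2 * #|T|)]_(p : T * T | g p.1 p.2) (deg g p.1 + deg g p.2 - 2).

Definition remove_edges g (S : {set {set T}}) : rel T :=
  fun x y => g x y && ([set x; y] \notin S).

Definition is_edge_cut g (S : {set {set T}}) : bool :=
  (S \subset edges g) && [exists x, exists y, ~~ connect (remove_edges g S) x y].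

Definition is_restricted_edge_cut g (S : {set {set T}}) : bool :=
  is_edge_cut g S &&
  [forall x, exists y, (y != x) && connect (remove_edges g S) x y].

(* lambda(G), lambda'(G): minimum cardinality of an (restricted) edge-cut.
   The default #|E(G)|.+1 acts as "infinity" (every cut has size <= #|E(G)|). *)
Definition lam g : nat :=
  \big[minn/(#|edges g|).+1]_(S : {set {set T}} | is_edge_cut g S) #|S|.
Definition lam' g : nat :=
  \big[minn/(#|edges g|).+1]_(S : {set {set T}} | is_restricted_edge_cut g S) #|S|.
End Graphs.

Definition cycle_rel (n : nat) : rel 'I_n :=
  fun i j => (nat_of_ord j == i.+1 %% n) || (nat_of_ord i == j.+1 %% n).

Definition strong (A B : finType) (g : rel A) (h : rel B) : rel (A * B) :=
  fun u v => [|| (u.1 == v.1) && h u.2 v.2,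
                 (u.2 == v.2) && g u.1 v.1
               | g u.1 v.1 && h u.2 v.2].
Arguments cycle_rel n : clear implicits.

From mathcomp Require Import all_boot all_order zify.
Set Implicit Arguments. Unset Strict Implicit. Unset Printing Implicit Defensive.
Import Order.TTheory.

(* Let H = G x C_n. Every vertex (x, i) of H has degree 3 d(x) + 2, so xi(H) = 6 delta + 2,
   attained by the edge {(x0, i), (x0, i + 1)} for x0 of minimum degree; the boundary of
   this edge is a restricted cut of size at most 6 delta + 2.
   Conversely, let X be a vertex set of H such that X and its complement have at least two
   vertices, and call the fibre of X over x mixed if it is neither empty nor the whole layer
   {x} x C_n. A mixed fibre has at least 2 boundary edges inside its layer, and at least 3
   (4 if both fibres are mixed) towards each adjacent layer.
   - No mixed fibre: X is the union of the layers over some A, and every edge of G leaving A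
     yields 3n boundary edges, so |bd X| >= 3n lambda(G).
   - Two mixed fibres x, x': |bd X| >= 2 + 2 + 4[xx'] + 3 (d(x) - [xx']) + 3 (d(x') - [xx']).
   - Exactly one mixed fibre x, with p vertices in X and q outside: the other layers are full
     (over A) or empty (over B), and |bd X| >= 2 + 3 (q d_A(x) + p d_B(x)) + 3n e(A, B). If B
     is empty, the complement of X lies in layer x, so q >= 2 and |bd X| >= 2 + 6 d(x);
     symmetrically if A is empty. Otherwise cutting G along A and along B gives
     lambda(G) <= d_A(x) + e(A, B) and lambda(G) <= d_B(x) + e(A, B), whence
     q d_A(x) + p d_B(x) + n e(A, B) >= n lambda(G).
   Only the bound 6 delta + 2 <= 3n lambda(G) of the hypothesis is used. *)

Lemma bigminn_le_cond (I : finType) (P : pred I) (F : I -> nat) d j :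
  P j -> \big[minn/d]_(i | P i) F i <= F j.
Proof. by move=> Pj; have := bigmin_le_cond d F Pj; rewrite minEnat leEnat. Qed.

Lemma bigminn_geP (I : finType) (P : pred I) (F : I -> nat) d m :
  reflect (m <= d /\ forall i, P i -> m <= F i) (m <= \big[minn/d]_(i | P i) F i).
Proof. by have := bigmin_geP d m P F; rewrite minEnat leEnat. Qed.

Section CycleOrdinal.
Variable n : nat.

Lemma cycle_relE (i j : 'I_n) : cycle_rel n i j = (j == ordS i) || (j == ord_pred i).
Proof.
have valS (k l : 'I_n) : (val l == (val k).+1 %% n) = (l == ordS k) by rewrite -val_eqE.
rewrite /cycle_rel !valS; congr orb; apply/eqP/eqP => [-> | ->].
  by rewrite ordSK.
by rewrite ord_predK.
Qed.

Lemma cycle_rel_sym : symmetric (cycle_rel n).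
Proof. by move=> i j; rewrite /cycle_rel orbC. Qed.

Lemma val_iter_ordS m (i : 'I_n) : val (iter m (@ordS n) i) = (i + m) %% n.
Proof.
elim: m => [|m IHm] /=; first by rewrite addn0 modn_small.
by rewrite IHm addnS -addn1 modnDml addn1.
Qed.

Lemma sum_ordS (F : 'I_n -> nat) : \sum_i F (ordS i) = \sum_i F i.
Proof. by rewrite [RHS](reindex_inj (@ordS_inj n)). Qed.

Lemma sum_ord_pred (F : 'I_n -> nat) : \sum_i F (ord_pred i) = \sum_i F i.
Proof. by rewrite [RHS](reindex_inj (@ord_pred_inj n)). Qed.

Lemma val_ordS (i : 'I_n) : val (ordS i) = if i.+1 < n then i.+1 else 0.
Proof.
case: i => i lt_in /=; case: ltnP => [lt_Si | le_nSi]; first by rewrite modn_small.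
have -> : i.+1 = n by lia.
by rewrite modnn.
Qed.

Lemma val_ord_pred (i : 'I_n) : val (ord_pred i) = if val i == 0 then n.-1 else (val i).-1.
Proof.
case: i => -[|i] lt_in /=; first by rewrite modn_small; lia.
by rewrite modnDr modn_small //; lia.
Qed.

Lemma exists_switch (a : 'I_n -> bool) :
  [exists i, a i] -> [exists i, ~~ a i] -> exists k, a k && ~~ a (ordS k).
Proof.
move=> /existsP[i ai] /existsP[j naj].
case: (pickP (fun k => a k && ~~ a (ordS k))) => [k | no_switch]; first by exists k.
have a_iter m : a (iter m (@ordS n) i).
  by elim: m => [|m IHm] //=; move: (no_switch (iter m (@ordS n) i)); rewrite IHm => /negbFE.
suff reach_j : iter (j + n - i) (@ordS n) i = j.
  by move: (a_iter (j + n - i)); rewrite reach_j (negbTE naj).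
apply: val_inj; rewrite val_iter_ordS.
have -> : i + (j + n - i) = j + n by have := ltn_ord i; lia.
by rewrite modnDr modn_small.
Qed.

Definition weight (a : 'I_n -> bool) := \sum_i (a i : nat).
Definition mixed (a : 'I_n -> bool) := [exists i, a i] && [exists i, ~~ a i].
Definition switches (a : 'I_n -> bool) := \sum_i (a i != a (ordS i) : nat).

Lemma weight_gt0 (a : 'I_n -> bool) : [exists i, a i] -> 0 < weight a.
Proof. by case/existsP=> i ai; rewrite /weight (bigD1 i) //= ai. Qed.

Lemma weight_gt1 (a : 'I_n -> bool) i j : i != j -> a i -> a j -> 1 < weight a.
Proof.
move=> ij ai aj; rewrite /weight (bigD1 i) //= (bigD1 j) /=; last by rewrite eq_sym ij.
by rewrite ai aj.
Qed.

Lemma weight_true : weight (fun=> true) = n.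
Proof. by rewrite /weight sum1_card card_ord. Qed.

Lemma weight_compl (a : 'I_n -> bool) : weight a + weight (fun i => ~~ a i) = n.
Proof.
rewrite -[RHS]weight_true /weight -big_split.
by apply: eq_bigr => i _; case: (a i).
Qed.

Lemma not_mixed (a : 'I_n -> bool) : ~~ mixed a -> (forall i, a i) \/ (forall i, ~~ a i).
Proof.
rewrite negb_and => /orP[/existsPn a0 | /existsPn a1]; [right | left] => // i.
by rewrite -[a i]negbK.
Qed.

Lemma switches_ge2 (a : 'I_n -> bool) : mixed a -> 2 <= switches a.
Proof.
case/andP=> a1 a0.
have [k /andP[ak nak']] := exists_switch a1 a0.
have [l /andP[nal al']] : exists l, ~~ a l && ~~ ~~ a (ordS l).
  by apply: exists_switch a0 _; case/existsP: a1 => i ai; apply/existsP; exists i; rewrite ai.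
have kl : k != l by apply: contraNneq nal => <-.
rewrite /switches (bigD1 k) //= (bigD1 l) /=; last by rewrite eq_sym.
by rewrite ak (negbTE nak') (negbTE nal) (negbNE al') addnA leq_addr.
Qed.

Definition cycle_cut (a : 'I_n -> bool) :=
  \sum_i ((a i && ~~ a (ordS i)) + (a i && ~~ a (ord_pred i))).

(* For fibres a, b of X over adjacent vertices x, y of G: the number of edges of the product
   from X inside {x} x C_n to {y} x C_n outside X. *)
Definition cross_cut (a b : 'I_n -> bool) :=
  \sum_i ((a i && ~~ b i) + (a i && ~~ b (ordS i)) + (a i && ~~ b (ord_pred i))).

Lemma cycle_cutE (a : 'I_n -> bool) : cycle_cut a = switches a.
Proof.
rewrite /cycle_cut big_split /= -(sum_ordS (fun i => a i && ~~ a (ord_pred i))) -big_split /=.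
by apply: eq_bigr => i _; rewrite ordSK; case: (a i); case: (a (ordS i)).
Qed.

Lemma cross_cut_emptyr (a b : 'I_n -> bool) : (forall i, ~~ b i) -> cross_cut a b = 3 * weight a.
Proof.
move=> b0; rewrite /cross_cut /weight big_distrr /=; apply: eq_bigr => i _.
by rewrite !b0 !andbT; case: (a i).
Qed.

Lemma cross_cut_fulll (a b : 'I_n -> bool) :
  (forall i, a i) -> cross_cut a b = 3 * weight (fun i => ~~ b i).
Proof.
move=> a1; rewrite /cross_cut /weight.
under eq_bigr => i _ do rewrite !a1 /=.
rewrite !big_split /= (sum_ordS (fun i => (~~ b i : nat))) (sum_ord_pred (fun i => (~~ b i : nat))).
by rewrite !mulSn mul0n addn0 addnA.
Qed.

Lemma cross_cut_pairE (a b : 'I_n -> bool) : cross_cut a b + cross_cut b a =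
  \sum_i ((a i != b i) + ((a i != b (ordS i)) + (a (ordS i) != b i))).
Proof.
have shift (u v : 'I_n -> bool) : \sum_i (u i && ~~ v (ord_pred i) : nat) =
    \sum_i (u (ordS i) && ~~ v i : nat).
  by rewrite -(sum_ordS (fun i => u i && ~~ v (ord_pred i))); under eq_bigr do rewrite ordSK.
rewrite /cross_cut !big_split /= !shift -!big_split /=; apply: eq_bigr => i _.
by case: (a i); case: (b i); case: (a (ordS i)); case: (b (ordS i)).
Qed.

Hypothesis n_gt2 : 2 < n.

Lemma ordS_neq (i : 'I_n) : (ordS i == i) = false.
Proof.
by apply/negbTE; case: i => i lt_in; rewrite -val_eqE val_ordS /=; case: ifP; lia.
Qed.

Lemma ord_pred_neq (i : 'I_n) : (ord_pred i == i) = false.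
Proof.
by apply/negbTE; case: i => i lt_in; rewrite -val_eqE val_ord_pred /=; case: (i =P 0); lia.
Qed.

Lemma ordS_neq_ord_pred (i : 'I_n) : (ordS i == ord_pred i) = false.
Proof.
apply/negbTE; case: i => i lt_in; rewrite -val_eqE val_ordS val_ord_pred /=.
by case: ifP; case: (i =P 0); lia.
Qed.

Lemma exists_ordS_eq3 (a : 'I_n -> bool) : n = 3 -> exists i, a i == a (ordS i).
Proof.
move=> n3; case: (pickP (fun j => a j == a (ordS j))) => [j | alt]; first by exists j.
pose i : 'I_n := Ordinal (ltnW (ltnW n_gt2)).
have back : ordS (ordS (ordS i)) = i.
  by apply: val_inj; have /= -> := val_iter_ordS 3 i; rewrite -{1}n3 modnn.
move: (alt i) (alt (ordS i)) (alt (ordS (ordS i))); rewrite back.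
by case: (a i); case: (a (ordS i)); case: (a (ordS (ordS i))).
Qed.

Lemma cross_cut_pair_mixed (a b : 'I_n -> bool) :
  mixed a -> mixed b -> 4 <= cross_cut a b + cross_cut b a.
Proof.
move=> ma mb; rewrite cross_cut_pairE big_split /=.
pose c i := a i != b i.
pose W := \sum_i ((a i != b (ordS i)) + (a (ordS i) != b i)).
pose D := weight (fun i => c i && c (ordS i)).
have xorW : switches c <= W.
  apply: leq_sum => i _; rewrite /c.
  by case: (a i); case: (b i); case: (a (ordS i)); case: (b (ordS i)).
have abW : switches a + switches b <= W + 2 * D.
  rewrite /switches -big_split /D /weight big_distrr -big_split /=; apply: leq_sum => i _.
  by rewrite /c; case: (a i); case: (b i); case: (a (ordS i)); case: (b (ordS i)).
have cD : weight c = D + weight (fun i => c i && ~~ c (ordS i)).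
  by rewrite /D /weight -big_split; apply: eq_bigr => i _; case: (c i); case: (c (ordS i)).
have := switches_ge2 ma; have := switches_ge2 mb.
rewrite -/W -[\sum_i (a i != b i : nat)]/(weight c).
case: (boolP (mixed c)) => [mc | /not_mixed [c1 | c0]].
- have := switches_ge2 mc; case/andP: (mc) => /exists_switch /[apply] -[k ck].
  have : 0 < weight (fun i => c i && ~~ c (ordS i)) by apply/weight_gt0/existsP; exists k.
  lia.
- have cn : weight c = n by rewrite -weight_true; apply: eq_bigr => i _; rewrite c1.
  have [n_gt3 | n_le3] := ltnP 3 n; first lia.
  have [i eq_ai] : exists i, a i == a (ordS i) by apply: exists_ordS_eq3; lia.
  have : 0 < W.
    rewrite /W (bigD1 i) //= addn_gt0; apply/orP; left; rewrite addn_gt0.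
    move: (c1 (ordS i)) eq_ai; rewrite /c.
    by case: (a i); case: (a (ordS i)); case: (b (ordS i)).
  lia.
- have D0 : D = 0 by rewrite /D /weight big1 // => i _; rewrite (negbTE (c0 i)).
  lia.
Qed.

Lemma cross_cut_pair_mixedl (a b : 'I_n -> bool) : mixed a -> 3 <= cross_cut a b + cross_cut b a.
Proof.
move=> ma; have [mb | /not_mixed [b1 | b0]] := boolP (mixed b).
- exact: leq_trans (cross_cut_pair_mixed ma mb).
- have := weight_gt0 (a := fun i => ~~ a i); case/andP: ma => _ a0 /(_ a0).
  rewrite (cross_cut_fulll a b1); lia.
- rewrite (cross_cut_emptyr a b0); case/andP: ma => /weight_gt0; lia.
Qed.

Lemma sum_cycle_nbr (P : 'I_n -> bool) i :
  \sum_j (P j && ((j == ordS i) || (j == ord_pred i)) : nat) = P (ordS i) + P (ord_pred i).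
Proof.
rewrite (bigD1 (ordS i)) //= eqxx andbT (bigD1 (ord_pred i)) /=; last first.
  by rewrite eq_sym ordS_neq_ord_pred.
rewrite eqxx orbT andbT big1 ?addn0 // => j /andP[jS jP].
by rewrite (negbTE jS) (negbTE jP) andbF.
Qed.

Lemma sum_closed_nbr (P : 'I_n -> bool) i :
  \sum_j (P j && [|| j == i, j == ordS i | j == ord_pred i] : nat) =
  P i + P (ordS i) + P (ord_pred i).
Proof.
rewrite (bigD1 i) //= eqxx andbT -addnA -sum_cycle_nbr; congr (_ + _).
rewrite [RHS](bigD1 i) //=.
rewrite [i == ordS i]eq_sym [i == ord_pred i]eq_sym ordS_neq ord_pred_neq andbF add0n.
by apply: eq_bigr => j ji; rewrite (negbTE ji).
Qed.

End CycleOrdinal.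

Lemma card_set_sum (U : finType) (P : pred U) : #|[set u | P u]| = \sum_u (P u : nat).
Proof. by rewrite -sum1dep_card big_mkcond; apply: eq_bigr => u _; case: (P u). Qed.

Lemma sum_prod (U W : finType) (G : U * W -> nat) : \sum_p G p = \sum_u \sum_w G (u, w).
Proof. by rewrite pair_big; apply: eq_bigr => -[]. Qed.

Lemma connected_exists_nbr (U : finType) (e : rel U) :
  connected e -> 1 < #|U| -> forall x, exists y, e x y.
Proof.
move=> e_conn /card_gt1P[a [b [_ _ ab]]] x.
have [w wx] : exists w, w != x.
  by case: (eqVneq a x) => [ax | ?]; [exists b; rewrite -ax eq_sym | exists a].
case/connectP: (e_conn x w) => -[/= _ wE | y p /= /andP[exy _] _]; last by exists y.
by rewrite wE eqxx in wx.
Qed.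

Section Boundary.
Variables (U : finType) (e : rel U).

Definition bd_size (A : {set U}) := \sum_u \sum_w ((u \in A) && (w \notin A) && e u w : nat).

Definition bd (A : {set U}) : {set {set U}} :=
  [set [set p.1; p.2] | p in [set p : U * U | (p.1 \in A) && (p.2 \notin A) && e p.1 p.2]].

Lemma card_bd (A : {set U}) : #|bd A| = bd_size A.
Proof.
rewrite card_in_imset; last first.
  move=> [a b] [c d]; rewrite !inE /= => /andP[/andP[aA bA] _] /andP[/andP[cA dA] _] ab_cd.
  have : a \in [set c; d] by rewrite -ab_cd set21.
  have : b \in [set c; d] by rewrite -ab_cd set22.
  rewrite !inE => /orP[/eqP eb | /eqP eb] /orP[/eqP ea | /eqP ea]; subst => //.
  - by rewrite cA in bA.
  - by rewrite cA in bA.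
  - by rewrite aA in dA.
by rewrite card_set_sum sum_prod.
Qed.

Lemma bd_sub_edges (A : {set U}) : bd A \subset edges e.
Proof.
apply/subsetP => ab /imsetP[[a b]]; rewrite inE /= => /andP[_ eab] ->.
by rewrite inE; apply/existsP; exists a; apply/existsP; exists b; rewrite eab eqxx.
Qed.

Lemma mem_bd (A : {set U}) u w : u \in A -> w \notin A -> e u w -> [set u; w] \in bd A.
Proof. by move=> uA wA euw; apply/imsetP; exists (u, w); rewrite // inE /= uA wA euw. Qed.

Lemma bd_separates (A : {set U}) u w : [set u; w] \in bd A -> (u \in A) != (w \in A).
Proof.
case/imsetP=> -[a b]; rewrite inE /= => /andP[/andP[aA bA] _] uw_ab.
have : a \in [set u; w] by rewrite uw_ab set21.
have : b \in [set u; w] by rewrite uw_ab set22.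
rewrite !inE => /orP[/eqP eb | /eqP eb] /orP[/eqP ea | /eqP ea]; subst.
- by rewrite aA in bA.
- by rewrite aA (negbTE bA).
- by rewrite aA (negbTE bA).
- by rewrite aA in bA.
Qed.

Lemma bd_size_le_deg (A : {set U}) :
  {in A, forall u, exists2 u', u' \in A & e u u'} -> bd_size A <= \sum_(u in A) (deg e u).-1.
Proof.
move=> inner; rewrite /bd_size [X in _ <= X]big_mkcond; apply: leq_sum => u _.
case: ifP => uA; last by rewrite big1 // => w _; rewrite uA.
have [u' u'A euu'] := inner u uA.
rewrite /deg card_set_sum [X in _ <= X.-1](bigD1 u') //= [X in X <= _](bigD1 u') //=.
rewrite euu' u'A add0n add1n /=.
by apply: leq_sum => w _; case: (w \in A).
Qed.

Hypothesis e_sym : symmetric e.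

Lemma bd_closed (A : {set U}) : closed (remove_edges e (bd A)) A.
Proof.
move=> u w /andP[euw uw_bd]; apply/idP/idP => [uA | wA]; apply: contraNT uw_bd => nA.
  exact: mem_bd.
by rewrite setUC; apply: mem_bd; rewrite // e_sym.
Qed.

Lemma is_edge_cut_bd (A : {set U}) u w : u \in A -> w \notin A -> is_edge_cut e (bd A).
Proof.
move=> uA wA; rewrite /is_edge_cut bd_sub_edges; apply/existsP; exists u; apply/existsP; exists w.
by apply: contraNN wA => /(closed_connect (@bd_closed A)) <-.
Qed.

Lemma lam_le_bd_size (A : {set U}) u w : u \in A -> w \notin A -> lam e <= bd_size A.
Proof. by move=> uA wA; rewrite -card_bd; apply/bigminn_le_cond/(is_edge_cut_bd uA wA). Qed.

Lemma restricted_edge_cut_bd (A : {set U}) u w : u \in A -> w \notin A ->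
  (forall v, exists2 v', v' != v & e v v' && ((v \in A) == (v' \in A))) ->
  is_restricted_edge_cut e (bd A).
Proof.
move=> uA wA same_side; rewrite /is_restricted_edge_cut (is_edge_cut_bd uA wA).
apply/forallP => v; have [v' v'v /andP[evv' /eqP side]] := same_side v.
apply/existsP; exists v'; rewrite v'v connect1 // /remove_edges evv'.
by apply/negP => /bd_separates; rewrite side eqxx.
Qed.

Lemma restricted_cut_contains_bd (S : {set {set U}}) : is_restricted_edge_cut e S ->
  exists X : {set U}, [/\ 1 < #|X|, 1 < #|~: X| & bd X \subset S].
Proof.
case/andP=> /andP[_ /existsP[u0 /existsP[v0 nc]]] /forallP big_comp.
pose R := remove_edges e S.
have R_sym : symmetric R by move=> x y; rewrite /R /remove_edges e_sym setUC.
exists [set w | connect R u0 w]; split.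
- have /existsP[u1 /andP[u10 cu1]] := big_comp u0.
  by apply/card_gt1P; exists u1, u0; rewrite !inE cu1 connect0 u10.
- have /existsP[v1 /andP[v10 cv1]] := big_comp v0.
  apply/card_gt1P; exists v1, v0; rewrite !inE v10 nc; split => //.
  apply: contraNN nc => /connect_trans; apply.
  by rewrite (sym_connect_sym R_sym).
apply/subsetP => ab /imsetP[[a b]]; rewrite !inE /= => /andP[/andP[ca nb] eab] ->.
apply: contraNT nb => ab_S; apply: connect_trans ca (connect1 _).
by rewrite /R /remove_edges eab ab_S.
Qed.

End Boundary.

Section DoubleSum.
Variables (U : finType) (F : U -> U -> nat).

Lemma double_sum_pivot x : \sum_a \sum_b F a b =
  F x x + \sum_(b | b != x) (F x b + F b x) + \sum_(a | a != x) \sum_(b | b != x) F a b.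
Proof.
rewrite (bigD1 x) //= (bigD1 x) //=.
under [X in _ + _ + X = _]eq_bigr => a _ do rewrite (bigD1 x) //=.
by rewrite big_split /= big_split /= !addnA.
Qed.

Lemma double_sum_pivot2 x x' : x' != x ->
  F x x + F x' x' + (F x x' + F x' x) +
  \sum_(b | (b != x) && (b != x')) ((F x b + F b x) + (F x' b + F b x'))
  <= \sum_a \sum_b F a b.
Proof.
move=> x'x; rewrite (double_sum_pivot x).
have split_x' (G : U -> nat) : \sum_(b | b != x) G b = G x' + \sum_(b | (b != x) && (b != x')) G b.
  by rewrite (bigD1 x').
rewrite !split_x' !big_split /=.
have rest : \sum_(a | (a != x) && (a != x')) F a x' <=
            \sum_(a | (a != x) && (a != x')) \sum_(b | b != x) F a b.
  by apply: leq_sum => a _; rewrite (split_x' (F a)) leq_addr.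
lia.
Qed.

End DoubleSum.

Lemma weighted_cut_bound p q a b e l : l <= a + e -> l <= b + e ->
  (p + q) * l <= q * a + p * b + (p + q) * e.
Proof.
move=> la lb; have [le_le | lt_el] := leqP l e; first nia.
have [r def_l] : exists r, l = r + e by exists (l - e); lia.
have qra : q * r <= q * a by rewrite leq_mul2l; apply/orP; right; lia.
have prb : p * r <= p * b by rewrite leq_mul2l; apply/orP; right; lia.
rewrite def_l; nia.
Qed.

Section StrongProduct.
Variables (T : finType) (g : rel T) (n : nat).
Hypotheses (g_sym : symmetric g) (g_irr : irreflexive g) (n_gt2 : 2 < n).
Local Notation V := (T * 'I_n)%type.
Local Notation H := (strong g (cycle_rel n)).

Lemma strong_same x i j : H (x, i) (x, j) = (j == ordS i) || (j == ord_pred i).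
Proof. by rewrite /strong /= eqxx g_irr andbF orbF cycle_relE. Qed.

Lemma strong_diff x y i j : x != y ->
  H (x, i) (y, j) = g x y && [|| j == i, j == ordS i | j == ord_pred i].
Proof.
move=> xy; rewrite /strong /= (negbTE xy) /= cycle_relE [i == j]eq_sym.
by case: (g x y); rewrite ?andbF ?andbT.
Qed.

Lemma strong_sym : symmetric H.
Proof.
by move=> [x i] [y j]; rewrite /strong /= ![y == x]eq_sym ![j == i]eq_sym g_sym cycle_rel_sym.
Qed.

Lemma degE x : deg g x = \sum_(y | y != x) (g x y : nat).
Proof. by rewrite /deg card_set_sum (bigD1 x) //= g_irr. Qed.

Lemma deg_strong x i : deg H (x, i) = 3 * deg g x + 2.
Proof.
rewrite degE /deg card_set_sum sum_prod (bigD1 x) //= big_distrr /= addnC.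
have own_layer : \sum_j (H (x, i) (x, j) : nat) = 2.
  under eq_bigr do rewrite strong_same.
  by have /= := sum_cycle_nbr n_gt2 (fun _ => true) i.
congr (_ + _) => //; apply: eq_bigr => y yx.
have xy : x != y by rewrite eq_sym.
under eq_bigr do rewrite strong_diff //.
by have /= -> := sum_closed_nbr n_gt2 (fun _ => g x y) i; case: (g x y).
Qed.

Definition fibre (X : {set V}) x := fun i : 'I_n => (x, i) \in X.

Definition layer_cut (X : {set V}) x y :=
  \sum_i \sum_j (((x, i) \in X) && ((y, j) \notin X) && H (x, i) (y, j) : nat).

Lemma bd_size_layers (X : {set V}) : bd_size H X = \sum_x \sum_y layer_cut X x y.
Proof.
rewrite /bd_size sum_prod; apply: eq_bigr => x _.
by under eq_bigr do rewrite sum_prod; rewrite exchange_big.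
Qed.

Lemma layer_cut_diag (X : {set V}) x : layer_cut X x x = switches (fibre X x).
Proof.
rewrite -cycle_cutE /layer_cut /cycle_cut /fibre; apply: eq_bigr => i _.
rewrite -(sum_cycle_nbr n_gt2 (fun j => ((x, i) \in X) && ((x, j) \notin X))) /=.
by apply: eq_bigr => j _; rewrite strong_same.
Qed.

Lemma layer_cut_off (X : {set V}) x y : x != y ->
  layer_cut X x y = g x y * cross_cut (fibre X x) (fibre X y).
Proof.
move=> xy; rewrite /layer_cut /cross_cut /fibre; have [gxy | ngxy] := boolP (g x y).
  rewrite mul1n; apply: eq_bigr => i _.
  rewrite -(sum_closed_nbr n_gt2 (fun j => ((x, i) \in X) && ((y, j) \notin X))) /=.
  by apply: eq_bigr => j _; rewrite strong_diff // gxy.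
rewrite mul0n big1 // => i _; rewrite big1 // => j _.
by rewrite strong_diff // (negbTE ngxy) andbF.
Qed.

Lemma layer_cut_full_empty (X : {set V}) x y : x != y ->
  (forall i, (x, i) \in X) -> (forall i, (y, i) \notin X) -> layer_cut X x y = g x y * (3 * n).
Proof.
move=> xy x1 y0; rewrite layer_cut_off // (cross_cut_fulll _ x1) -[in RHS](weight_true n).
by congr (_ * (_ * _)); apply: eq_bigr => i _; rewrite /fibre y0.
Qed.

Lemma bd_size_unmixed (X : {set V}) u v : (forall x, ~~ mixed (fibre X x)) ->
  u \in X -> v \notin X -> 3 * n * lam g <= bd_size H X.
Proof.
move=> unmixed uX vX; pose A := [set x | [exists i, (x, i) \in X]].
have fullA x : x \in A -> forall i, (x, i) \in X.
  rewrite inE => /existsP[j xjX]; have [//|x0] := not_mixed (unmixed x).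
  by move: (x0 j); rewrite /fibre xjX.
have emptyA x : x \notin A -> forall i, (x, i) \notin X by rewrite inE => /existsPn.
have lamA : lam g <= bd_size g A.
  apply: (lam_le_bd_size g_sym (u := u.1) (w := v.1)).
    by rewrite inE; apply/existsP; exists u.2; rewrite -surjective_pairing.
  by apply: contraNN vX => /fullA /(_ v.2); rewrite -surjective_pairing.
rewrite bd_size_layers; apply: leq_trans (leq_mul (leqnn _) lamA) _.
rewrite /bd_size big_distrr; apply: leq_sum => x _; rewrite big_distrr; apply: leq_sum => y _.
have [xA | xnA] := boolP (x \in A); have [yA | ynA] := boolP (y \in A); rewrite /= ?muln0 //.
have xy : x != y by apply: contraNneq ynA => <-.
by rewrite (layer_cut_full_empty xy (fullA x xA) (emptyA y ynA)) mulnC.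
Qed.

Lemma bd_size_two_mixed (X : {set V}) dl x x' : (forall y, dl <= deg g y) -> x' != x ->
  mixed (fibre X x) -> mixed (fibre X x') -> 6 * dl + 2 <= bd_size H X.
Proof.
move=> dl_deg x'x mx mx'; rewrite bd_size_layers; apply: leq_trans (double_sum_pivot2 _ x'x).
have xx' : x != x' by rewrite eq_sym.
have inner_x := switches_ge2 mx; have inner_x' := switches_ge2 mx'.
have cross_xx' : 4 * g x x' <= layer_cut X x x' + layer_cut X x' x.
  rewrite !layer_cut_off // [g x' x]g_sym -mulnDr mulnC leq_mul2l.
  by rewrite (cross_cut_pair_mixed n_gt2) ?orbT.
have cross_rest : \sum_(b | (b != x) && (b != x')) (3 * g x b + 3 * g x' b) <=
    \sum_(b | (b != x) && (b != x')) ((layer_cut X x b + layer_cut X b x) +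
                                      (layer_cut X x' b + layer_cut X b x')).
  apply: leq_sum => b /andP[bx bx'].
  have xb : x != b by rewrite eq_sym.
  have x'b : x' != b by rewrite eq_sym.
  rewrite !layer_cut_off // [g b x]g_sym [g b x']g_sym.
  rewrite ![3 * _]mulnC -!mulnDr; apply: leq_add; rewrite leq_mul2l.
    by rewrite (cross_cut_pair_mixedl n_gt2 _ mx) orbT.
  by rewrite (cross_cut_pair_mixedl n_gt2 _ mx') orbT.
rewrite big_split /= -!big_distrr /= in cross_rest.
have deg_x : deg g x = g x x' + \sum_(b | (b != x) && (b != x')) (g x b : nat).
  by rewrite degE (bigD1 x').
have deg_x' : deg g x' = g x x' + \sum_(b | (b != x) && (b != x')) (g x' b : nat).
  rewrite degE (bigD1 x) // g_sym; congr (_ + _); apply: eq_bigl => b; exact: andbC.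
have := dl_deg x; have := dl_deg x'; rewrite !layer_cut_diag.
have : (g x x' : nat) <= 1 by case: (g x x').
lia.
Qed.

Lemma weight_fibre_gt1 (Y : {set V}) x : (forall u, u \in Y -> u.1 = x) ->
  1 < #|Y| -> 1 < weight (fibre Y x).
Proof.
move=> in_layer /card_gt1P[[y i] [[y' j] [yiY y'jY ne]]].
have ey := in_layer _ yiY; have ey' := in_layer _ y'jY; rewrite /= in ey ey'; subst y y'.
by apply: (weight_gt1 (i := i) (j := j)) => //; move: ne; rewrite xpair_eqE eqxx.
Qed.

Section OneMixedFibre.
Variables (X : {set V}) (x : T).
Hypotheses (mixed_x : mixed (fibre X x)) (unmixed : forall y, y != x -> ~~ mixed (fibre X y)).

Let A := [set y | (y != x) && [forall i, (y, i) \in X]].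
Let B := [set y | (y != x) && [forall i, (y, i) \notin X]].
Let p := weight (fibre X x).
Let q := weight (fun i => ~~ fibre X x i).
Let nbrA := \sum_(y | y != x) (g x y && (y \in A) : nat).
Let nbrB := \sum_(y | y != x) (g x y && (y \in B) : nat).
Let eAB := \sum_(a | a != x) \sum_(b | b != x) ((a \in A) && (b \in B) && g a b : nat).

Lemma fibre_full y : y \in A -> forall i, fibre X y i.
Proof. by rewrite inE => /andP[_ /forallP]. Qed.

Lemma fibre_empty y : y \in B -> forall i, ~~ fibre X y i.
Proof. by rewrite inE => /andP[_ /forallP]. Qed.

Lemma memB_notA y : y != x -> (y \in B) = (y \notin A).
Proof.
move=> yx; rewrite !inE yx /=; pose i0 : 'I_n := Ordinal (ltnW (ltnW n_gt2)).
have [y1 | y0] := not_mixed (unmixed yx).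
  have -> : [forall i, (y, i) \in X] by apply/forallP.
  by apply/negbTE/forallPn; exists i0; rewrite negbK; apply: y1.
have -> : [forall i, (y, i) \notin X] by apply/forallP.
by apply/esym/negP => /forallP /(_ i0); apply/negP/y0.
Qed.

Lemma nbrA_nbrB : nbrA + nbrB = deg g x.
Proof.
rewrite degE -big_split; apply: eq_bigr => y yx /=.
by rewrite (memB_notA yx); case: (y \in A); case: (g x y).
Qed.

Lemma one_mixed_bd_size_ge : 2 + 3 * (q * nbrA + p * nbrB) + 3 * n * eAB <= bd_size H X.
Proof.
rewrite bd_size_layers (double_sum_pivot _ x) layer_cut_diag.
have inner := switches_ge2 mixed_x.
have cross : 3 * (q * nbrA + p * nbrB) <= \sum_(y | y != x) (layer_cut X x y + layer_cut X y x).
  rewrite /nbrA /nbrB !big_distrr -big_split big_distrr /=; apply: leq_sum => y yx.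
  have xy : x != y by rewrite eq_sym.
  rewrite (memB_notA yx); have [yA | ynA] := boolP (y \in A); rewrite /= ?andbT ?andbF ?muln0.
    rewrite [layer_cut X y x]layer_cut_off // (cross_cut_fulll _ (fibre_full yA)) (g_sym y x).
    lia.
  have yB : y \in B by rewrite memB_notA.
  rewrite [layer_cut X x y]layer_cut_off // (cross_cut_emptyr _ (fibre_empty yB)).
  lia.
have rest : 3 * n * eAB <= \sum_(a | a != x) \sum_(b | b != x) layer_cut X a b.
  rewrite /eAB big_distrr; apply: leq_sum => a ax; rewrite big_distrr; apply: leq_sum => b bx.
  have [aA | _] := boolP (a \in A); last by rewrite /= muln0.
  have [bB | _] := boolP (b \in B); last by rewrite andbF /= muln0.
  have ab : a != b by apply/eqP => ab; move: bB; rewrite -ab (memB_notA ax) aA.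
  by rewrite /= (layer_cut_full_empty ab (fibre_full aA) (fibre_empty bB)) mulnC.
lia.
Qed.

Lemma lam_le_nbrA z : z \in A -> lam g <= nbrA + eAB.
Proof.
move=> zA; have xA : x \notin A by rewrite inE eqxx.
apply: leq_trans (lam_le_bd_size g_sym zA xA) _.
rewrite /bd_size (bigD1 x) //= big1 ?add0n => [|w _]; last by rewrite (negbTE xA).
rewrite /nbrA /eAB -big_split /=; apply: leq_sum => a ax.
rewrite (bigD1 x) //= xA andbT g_sym andbC leq_add2l; apply: leq_sum => b bx.
by rewrite (memB_notA bx).
Qed.

Lemma lam_le_nbrB z : z \in B -> lam g <= nbrB + eAB.
Proof.
move=> zB; have xB : x \in ~: B by rewrite !inE eqxx.
have zB' : z \notin ~: B by rewrite inE negbK.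
apply: leq_trans (lam_le_bd_size g_sym xB zB') _.
rewrite /bd_size (bigD1 x) //= xB; apply: leq_add.
  rewrite (bigD1 x) //= xB add0n /nbrB; apply: leq_sum => b bx.
  by rewrite in_setC negbK andbC.
rewrite /eAB; apply: leq_sum => a ax; rewrite (bigD1 x) //= xB andbF add0n.
by apply: leq_sum => b bx; rewrite !in_setC negbK (memB_notA ax) negbK.
Qed.

Lemma bd_size_one_mixed dl : (forall y, dl <= deg g y) -> 6 * dl + 2 <= 3 * n * lam g ->
  1 < #|X| -> 1 < #|~: X| -> 6 * dl + 2 <= bd_size H X.
Proof.
move=> dl_deg dl_lam X_gt1 CX_gt1; have bound := one_mixed_bd_size_ge.
have deg_x := nbrA_nbrB; have dl_x := dl_deg x.
have [A0 | /set0Pn[z zA]] := eqVneq A set0.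
  have nbrA0 : nbrA = 0 by rewrite /nbrA big1 // => y _; rewrite A0 in_set0 andbF.
  have p_gt1 : 1 < p.
    apply: weight_fibre_gt1 X_gt1 => -[y i] yiX /=; apply: contraTeq yiX => yx.
    have yB : y \in B by rewrite memB_notA // A0 in_set0.
    exact: fibre_empty yB i.
  have dl_nbrB : dl <= nbrB by lia.
  have := leq_mul p_gt1 dl_nbrB; lia.
have [B0 | /set0Pn[z' z'B]] := eqVneq B set0.
  have nbrB0 : nbrB = 0 by rewrite /nbrB big1 // => y _; rewrite B0 in_set0 andbF.
  have q_gt1 : 1 < q.
    have -> : q = weight (fibre (~: X) x) by apply: eq_bigr => i _; rewrite /fibre inE.
    apply: weight_fibre_gt1 CX_gt1 => -[y i]; rewrite inE /=; apply: contraNeq => yx.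
    have yA : y \in A by rewrite -[y \in A]negbK -memB_notA // B0 in_set0.
    exact: fibre_full yA i.
  have dl_nbrA : dl <= nbrA by lia.
  have := leq_mul q_gt1 dl_nbrA; lia.
have := weighted_cut_bound p q (lam_le_nbrA zA) (lam_le_nbrB z'B).
rewrite weight_compl; lia.
Qed.

End OneMixedFibre.

Lemma bd_size_lower_bound (X : {set V}) dl : (forall y, dl <= deg g y) ->
  6 * dl + 2 <= 3 * n * lam g -> 1 < #|X| -> 1 < #|~: X| -> 6 * dl + 2 <= bd_size H X.
Proof.
move=> dl_deg dl_lam X_gt1 CX_gt1.
have [/existsP[x mx] | unmixed] := boolP [exists x, mixed (fibre X x)].
  have [/existsP[x' /andP[x'x mx']] | one] := boolP [exists x', (x' != x) && mixed (fibre X x')].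
    exact: bd_size_two_mixed dl_deg x'x mx mx'.
  apply: (bd_size_one_mixed mx) dl_deg dl_lam X_gt1 CX_gt1 => y yx.
  by apply: contraNN one => my; apply/existsP; exists y; rewrite yx.
have /card_gt0P[u uX] := ltnW X_gt1; have /card_gt0P[v] := ltnW CX_gt1; rewrite inE => vX.
exact: leq_trans dl_lam (bd_size_unmixed (existsPn unmixed) uX vX).
Qed.

Lemma restricted_cut_lower_bound (S : {set {set V}}) dl : (forall y, dl <= deg g y) ->
  6 * dl + 2 <= 3 * n * lam g -> is_restricted_edge_cut H S -> 6 * dl + 2 <= #|S|.
Proof.
move=> dl_deg dl_lam /(restricted_cut_contains_bd strong_sym)[X [X_gt1 CX_gt1 bdS]].
apply: leq_trans (subset_leq_card bdS); rewrite card_bd.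
exact: bd_size_lower_bound.
Qed.

Lemma restricted_bd_layer_edge x0 z i : g x0 z ->
  is_restricted_edge_cut H (bd H [set (x0, i); (x0, ordS i)]).
Proof.
move=> gz; have zx : z != x0 by apply: contraTneq gz => ->; rewrite g_irr.
have xz : x0 != z by rewrite eq_sym.
have block (y : T) j :
    ((y, j) \in [set (x0, i); (x0, ordS i)]) = (y == x0) && ((j == i) || (j == ordS i)).
  by rewrite !inE !xpair_eqE andb_orr.
apply: (restricted_edge_cut_bd strong_sym (u := (x0, i)) (w := (z, i))) => [||[y j]].
    by rewrite block !eqxx.
  by rewrite block (negbTE zx).
have [-> | yx] := eqVneq y x0; last first.
  exists (y, ordS j); first by rewrite xpair_eqE eqxx ordS_neq.
  by rewrite strong_same eqxx !block (negbTE yx).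
have [/orP[/eqP-> | /eqP->] | j_out] := boolP ((j == i) || (j == ordS i)).
- exists (x0, ordS i); first by rewrite xpair_eqE eqxx ordS_neq.
  by rewrite strong_same !block !eqxx orbT.
- exists (x0, i); first by rewrite xpair_eqE eqxx eq_sym ordS_neq.
  by rewrite strong_same ordSK !block !eqxx !orbT.
exists (z, j); first by rewrite xpair_eqE (negbTE zx).
by rewrite strong_diff // gz !block (negbTE j_out) (negbTE zx) !eqxx.
Qed.

Lemma card_bd_layer_edge x0 i : #|bd H [set (x0, i); (x0, ordS i)]| <= 6 * deg g x0 + 2.
Proof.
rewrite card_bd; apply: leq_trans (bd_size_le_deg _) _ => [u | ].
  rewrite !inE => /orP[/eqP-> | /eqP->].
    by exists (x0, ordS i); rewrite ?inE ?eqxx ?orbT // strong_same eqxx.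
  by exists (x0, i); rewrite ?inE ?eqxx // strong_same ordSK eqxx orbT.
rewrite (eq_bigr (fun=> 3 * deg g x0 + 1)) => [|u]; last first.
  by rewrite !inE => /orP[/eqP-> | /eqP->]; rewrite deg_strong addn2 addn1.
by rewrite sum_nat_const cards2 xpair_eqE eqxx eq_sym ordS_neq; lia.
Qed.

Lemma xi_strong x0 : (forall x, deg g x0 <= deg g x) -> deg g x0 < #|T| ->
  xi H = 6 * deg g x0 + 2.
Proof.
move=> x0_min x0_lt; pose i0 : 'I_n := Ordinal (ltnW (ltnW n_gt2)).
apply/eqP; rewrite eqn_leq; apply/andP; split.
  have edge : H (x0, i0) (x0, ordS i0) by rewrite strong_same eqxx.
  apply: leq_trans (bigminn_le_cond _ _ (j := ((x0, i0), (x0, ordS i0))) edge) _.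
  by rewrite /= !deg_strong; lia.
apply/bigminn_geP; split => [|[[x i] [y j]] _ /=].
  by rewrite card_prod card_ord; nia.
by rewrite !deg_strong; have := x0_min x; have := x0_min y; lia.
Qed.

Lemma lam'_strong x0 z : g x0 z -> (forall x, deg g x0 <= deg g x) ->
  6 * deg g x0 + 2 <= 3 * n * lam g -> lam' H = 6 * deg g x0 + 2.
Proof.
move=> gz x0_min x0_lam; pose i0 : 'I_n := Ordinal (ltnW (ltnW n_gt2)).
have block_cut := restricted_bd_layer_edge i0 gz.
apply/eqP; rewrite eqn_leq; apply/andP; split.
  exact: leq_trans (bigminn_le_cond _ _ block_cut) (card_bd_layer_edge x0 i0).
apply/bigminn_geP; split => [|S]; last exact: restricted_cut_lower_bound.
apply: leq_trans (restricted_cut_lower_bound x0_min x0_lam block_cut) _.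
exact/leqW/subset_leq_card/bd_sub_edges.
Qed.

End StrongProduct.

Lemma deg_ltn_card (T : finType) (g : rel T) x : irreflexive g -> deg g x < #|T|.
Proof.
move=> g_irr; rewrite /deg -cardsT; apply/proper_card/properP; split; first exact: subsetT.
by exists x; rewrite ?inE ?g_irr.
Qed.

Theorem corollary3p5 (T : finType) (g : rel T) (n : nat) :
  symmetric g -> irreflexive g ->
  1 < #|T| -> connected g -> 3 <= n ->
  6 * mindeg g + 2 <= minn (3 * n * lam g) (2 * (#|T| + 2 * #|edges g|)) ->
  lam' (strong g (cycle_rel n)) = xi (strong g (cycle_rel n)).
Proof.
move=> g_sym g_irr T_gt1 g_conn n_ge3 hyp.
have /card_gt0P[t0 _] := ltnW T_gt1.
pose x0 := [arg min_(x < t0) deg g x].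
have x0_min x : deg g x0 <= deg g x by rewrite /x0; case: arg_minnP => // y _; apply.
have mindegE : mindeg g = deg g x0.
  apply/eqP; rewrite eqn_leq bigminn_le_cond //; apply/bigminn_geP.
  by split=> [|x _]; [exact/ltnW/deg_ltn_card | exact: x0_min].
have [z gz] := connected_exists_nbr g_conn T_gt1 x0.
rewrite (lam'_strong g_sym g_irr n_ge3 gz x0_min); last first.
  by rewrite -mindegE; apply: leq_trans hyp (geq_minl _ _).
by rewrite (xi_strong g_irr n_ge3 x0_min (deg_ltn_card x0 g_irr)).
Qed.
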